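(* Let $r\in\mathbb{N}_0$, $m=r+1$, and let $x_0\le x_1\le\dots\le x_m$ be real numbers with $x_0<x_m$. If $f\in C^{(r)}[x_0,x_m]$, then \[ \big|[x_0,\dots,x_m;f]\big|\le c\,\Lambda_r(x_0,\dots,x_m;\omega_1), \] where $\omega_1(t):=\omega_1(f^{(r)},t;[x_0,x_m])$ and the constant $c$ depends only on $m$.
   Context: Modulus of smoothness: for $g\in C[a,b]$, $k\in\mathbb{N}$, $\Delta^k_u(g,x;[a,b]):=\sum_{i=0}^k(-1)^i\binom ki g(x+(k/2-i)u)$ if $x\pm(k/2)u\in[a,b]$, else $0$; $\omega_k(g,t;[a,b]):=\sup_{0<u\le t}\|\Delta^k_u(g,\cdot;[a,b])\|_{C[a,b]}$. Divided differences with repeated points: $[x_0;f]:=f(x_0)$; if $x_0=\dots=x_m$, $[x_0,\dots,x_m;f]:=f^{(m)}(x_0)/m!$; otherwise for $j^*$ with $x_{j^*}\ne x_0$, $[x_0,\dots,x_m;f]:=\frac{[x_1,\dots,x_m;f]-[x_0,\dots,x_{j^*-1},x_{j^*+1},\dots,x_m;f]}{x_{j^*}-x_0}$. For ordered $y_0\le\dots\le y_n$: $\mathcal{Q}_{n,r}:=\{(p,q):0\le p,q\le n,\ q-p\ge r+1\}$, $y_{-1}:=y_0-(y_n-y_0)$, $y_{n+1}:=y_n+(y_n-y_0)$, $d(p,q):=\min\{y_{q+1}-y_p,y_q-y_{p-1}\}$, and for nondecreasing $\varphi\in C[0,\infty]$ with $\varphi(0)=0$, $\Lambda_{p,q,r}(y_0,\dots,y_n;\varphi):=\frac{\int_{y_q-y_p}^{d(p,q)}u^{p+r-q-1}\varphi(u)du}{\prod_{i=0}^{p-1}(y_q-y_i)\prod_{i=q+1}^{n}(y_i-y_p)}$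 (empty products $=1$), $\Lambda_r(y_0,\dots,y_n;\varphi):=\max_{(p,q)\in\mathcal{Q}_{n,r}}\Lambda_{p,q,r}(y_0,\dots,y_n;\varphi)$. *)

From Stdlib Require Import Reals Lra Lia List.
From Coquelicot Require Import Coquelicot.
Import ListNotations.
Open Scope R_scope.

Definition sym_diff (k : nat) (g : R -> R) (u x a b : R) : R :=
  if Rle_dec a (x - INR k / 2 * u) then
    if Rle_dec (x + INR k / 2 * u) b then
      sum_f_R0 (fun i => (-1) ^ i * Stdlib.Reals.Binomial.C k i
                          * g (x + (INR k / 2 - INR i) * u)) k
    else 0
  else 0.

(* omega_k(g,t;[a,b]) = sup_{0<u<=t} sup_{x in [a,b]} |Delta^k_u(g,x;[a,b])|
   (the empty sup, at t <= 0, is taken to be 0) *)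
Definition omega (k : nat) (g : R -> R) (t a b : R) : R :=
  real (Lub_Rbar (fun z => exists u x, 0 < u <= t /\ a <= x <= b /\
                              z = Rabs (sym_diff k g u x a b))).

Definition cont_within (a b : R) (g : R -> R) : Prop :=
  forall x, a <= x <= b -> forall eps, 0 < eps -> exists delta, 0 < delta /\
    forall y, a <= y <= b -> Rabs (y - x) < delta -> Rabs (g y - g x) < eps.

Definition deriv_within (a b : R) (g g' : R -> R) : Prop :=
  forall x, a <= x <= b -> forall eps, 0 < eps -> exists delta, 0 < delta /\
    forall y, a <= y <= b -> Rabs (y - x) < delta ->
      Rabs (g y - g x - g' x * (y - x)) <= eps * Rabs (y - x).

(* D 0, D 1, ..., D r are f, f', ..., f^(r), all continuous on [a,b] *)
Definition Cr_on (a b : R) (r : nat) (D : nat -> R -> R) : Prop :=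
  (forall k, (k <= r)%nat -> cont_within a b (D k)) /\
  (forall k, (k < r)%nat -> deriv_within a b (D k) (D (S k))).

Definition Reqb (x y : R) : bool := if Req_EM_T x y then true else false.

Fixpoint first_neq (x0 : R) (l : list R) : nat :=
  match l with
  | nil => O
  | y :: l' => if Reqb y x0 then S (first_neq x0 l') else O
  end.

Definition remove_at (j : nat) (l : list R) : list R :=
  firstn j l ++ skipn (S j) l.

Fixpoint dd (D : nat -> R -> R) (n : nat) (l : list R) : R :=
  match n with
  | O => D O (hd 0 l)
  | S n' =>
      let x0 := hd 0 l in
      if forallb (fun y => Reqb y x0) l then D n x0 / INR (Stdlib.Arith.Factorial.fact n)
      else
        let j := first_neq x0 l in
        (dd D n' (tl l) - dd D n' (remove_at j l)) / (nth j l 0 - x0)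
  end.

Definition divdiff (D : nat -> R -> R) (l : list R) : R :=
  dd D (length l - 1) l.

Definition prodR (l : list R) : R := fold_right Rmult 1 l.

(* y_{p-1} with the convention y_{-1} = y_0 - (y_n - y_0) *)
Definition y_before (n : nat) (y : nat -> R) (p : nat) : R :=
  match p with O => y O - (y n - y O) | S p' => y p' end.
(* y_{q+1} with the convention y_{n+1} = y_n + (y_n - y_0) *)
Definition y_after (n : nat) (y : nat -> R) (q : nat) : R :=
  if Nat.eqb q n then y n + (y n - y O) else y (S q).

Definition dpq (n : nat) (y : nat -> R) (p q : nat) : R :=
  Rmin (y_after n y q - y p) (y q - y_before n y p).

Definition Lambda_pqr (n : nat) (y : nat -> R) (phi : R -> R) (p q r : nat) : R :=
  RInt (fun u => powerRZ u (Z.of_nat p + Z.of_nat r - Z.of_nat q - 1) * phi u)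
       (y q - y p) (dpq n y p q)
  / (prodR (map (fun i => y q - y i) (seq 0 p))
     * prodR (map (fun i => y i - y p) (seq (S q) (n - q)))).

Definition Qnr (n r : nat) : list (nat * nat) :=
  filter (fun pq => Nat.leb (fst pq + S r) (snd pq))
         (list_prod (seq 0 (S n)) (seq 0 (S n))).

Definition maxlist (l : list R) : R :=
  match l with nil => 0 | a :: l' => fold_right Rmax a l' end.

Definition Lambda_r (n r : nat) (y : nat -> R) (phi : R -> R) : R :=
  maxlist (map (fun pq => Lambda_pqr n y phi (fst pq) (snd pq) r) (Qnr n r)).

(* Since m = r + 1, the only pair in Q_{m,r} is (0, m), and omega_1(f^(r), .) is constant
   beyond the length L = x_m - x_0, so Lambda_r = omega_1(L) / (2 L).  For sorted nodes,
   [x_0, ..., x_m; f] = ([x_1, ..., x_m; f] - [x_0, ..., x_{m-1}; f]) / L, and both divided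
   differences of order r lie between min f^(r) / r! and max f^(r) / r!; hence
   |[x_0, ..., x_m; f]| <= omega_1(L) / L = 2 Lambda_r.

   The mean value property of divided differences (with repeated nodes) is proved by induction
   on the order: appending a node z, [x_0, ..., x_k, z; f] = [x_0, ..., x_k; g] for the slope
   g(t) = [t, z; f], whose k-th derivative is k! R_k(t) / (z - t)^(k+1) with R_k the Taylor
   remainder of f at z around t; R_k lies between min f^(k+1) and max f^(k+1) times
   (z - t)^(k+1) / (k+1)!, which puts k-th derivatives of g between min f^(k+1) / (k+1) and
   max f^(k+1) / (k+1). *)

From Stdlib Require Import Reals List Lra Lia Sorted Factorial.
From Coquelicot Require Import Coquelicot.
Import ListNotations.
Open Scope R_scope.

Lemma Reqb_refl c : Reqb c c = true.
Proof. unfold Reqb; destruct (Req_EM_T c c); congruence. Qed.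

Lemma Reqb_neq y c : y <> c -> Reqb y c = false.
Proof. intros H; unfold Reqb; destruct (Req_EM_T y c); congruence. Qed.

Lemma forallb_Reqb_repeat c k : forallb (fun y => Reqb y c) (repeat c k) = true.
Proof. induction k; simpl; rewrite ?Reqb_refl; auto. Qed.

Lemma dd_repeat D n c : dd D n (repeat c (S n)) = D n c / INR (fact n).
Proof.
  destruct n; simpl.
  - field.
  - rewrite Reqb_refl, forallb_Reqb_repeat. reflexivity.
Qed.

Lemma first_neq_repeat_app x0 y a l : y <> x0 -> first_neq x0 (repeat x0 a ++ y :: l) = a.
Proof. intros Hy; induction a; simpl; rewrite ?Reqb_refl, ?Reqb_neq, ?IHa; auto. Qed.

Lemma nth_repeat_app x0 y a l : nth a (repeat x0 a ++ y :: l) 0 = y.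
Proof. induction a; simpl; auto. Qed.

Lemma remove_at_repeat_app x0 y a l : remove_at a (repeat x0 a ++ y :: l) = repeat x0 a ++ l.
Proof. unfold remove_at; induction a; simpl; f_equal; auto. Qed.

Lemma dd_repeat_app_cons D n x0 y a l : y <> x0 ->
  dd D (S n) (repeat x0 (S a) ++ y :: l) =
  (dd D n (repeat x0 a ++ y :: l) - dd D n (repeat x0 (S a) ++ l)) / (y - x0).
Proof.
  intros Hy. cbn [dd hd].
  rewrite forallb_app, forallb_Reqb_repeat. simpl forallb at 1.
  rewrite Reqb_neq, first_neq_repeat_app, nth_repeat_app, remove_at_repeat_app by auto.
  reflexivity.
Qed.

Lemma repeat_or_first_neq (x0 : R) (t : list R) : x0 :: t = repeat x0 (S (length t)) \/
  exists a y l, y <> x0 /\ x0 :: t = repeat x0 (S a) ++ y :: l.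
Proof.
  induction t as [|y t IH]; [left; reflexivity|].
  destruct (Req_EM_T y x0) as [->|Hne].
  - destruct IH as [H|(a & y & l & Hy & H)].
    + left. simpl in *. rewrite H. reflexivity.
    + right. exists (S a), y, l. split; auto. rewrite H. reflexivity.
  - right. exists 0%nat, y, t. auto.
Qed.

Lemma StronglySorted_app_inv (l1 l2 : list R) : StronglySorted Rle (l1 ++ l2) ->
  StronglySorted Rle l1 /\ StronglySorted Rle l2 /\
  (forall u v, In u l1 -> In v l2 -> u <= v).
Proof.
  induction l1 as [|a l1 IH]; simpl; intros H.
  - repeat split; auto using SSorted_nil. intros u v [].
  - apply StronglySorted_inv in H as [Hl Ha]. destruct (IH Hl) as (H1 & H2 & H3).
    rewrite Forall_forall in Ha. repeat split; auto.
    + constructor; auto. rewrite Forall_forall; auto using in_or_app.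
    + intros u v [<-|Hu] Hv; auto using in_or_app.
Qed.

Lemma StronglySorted_remove (l1 : list R) y l2 :
  StronglySorted Rle (l1 ++ y :: l2) -> StronglySorted Rle (l1 ++ l2).
Proof.
  induction l1 as [|a l1 IH]; simpl; intros H.
  - now apply StronglySorted_inv in H.
  - apply StronglySorted_inv in H as [Hl Ha]. constructor; auto.
    rewrite Forall_forall in *. intros v Hv. apply Ha.
    apply in_app_or in Hv as [Hv|Hv]; auto using in_or_app, in_cons.
Qed.

(* [dd] eliminates the first node that differs from the head; for sorted nodes this agrees with
   the recurrence through the two endpoints. *)
Definition endpoint_recurrence (D : nat -> R -> R) (n : nat) : Prop :=
  forall x0 m z, StronglySorted Rle (x0 :: m ++ [z]) -> length m = n -> x0 < z ->
  dd D (S n) (x0 :: m ++ [z]) = (dd D n (m ++ [z]) - dd D n (x0 :: m)) / (z - x0).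

Lemma endpoint_recurrence_0 D : endpoint_recurrence D 0.
Proof.
  intros x0 [|? ?] z _ Hm Hz; [|discriminate].
  apply (dd_repeat_app_cons D 0 x0 z 0 []). lra.
Qed.

Section EndpointRecurrenceStep.

Variables (D : nat -> R -> R) (n : nat).
Hypothesis IH : endpoint_recurrence D n.

Lemma dd_drop_interior x0 a y l z : x0 < y < z ->
  StronglySorted Rle (repeat x0 a ++ y :: l ++ [z]) -> (a + length l = n)%nat ->
  dd D (S n) (repeat x0 a ++ y :: l ++ [z]) * (z - y) =
  dd D n (repeat x0 a ++ l ++ [z]) - dd D n (repeat x0 a ++ y :: l).
Proof.
  intros Hy Hs Hn. destruct a as [|a]; cbn [repeat app] in *.
  - rewrite (IH y l z) by (auto; lra). field. lra.
  - pose proof (dd_repeat_app_cons D n x0 y a (l ++ [z]) ltac:(lra)) as Hdef.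
    assert (Hlen : length (repeat x0 a ++ y :: l) = n)
      by (rewrite length_app, repeat_length; simpl; lia).
    pose proof (IH x0 (repeat x0 a ++ y :: l) z) as Hrec.
    rewrite <- app_assoc in Hrec. cbn [repeat app] in Hdef, Hrec.
    specialize (Hrec Hs Hlen ltac:(lra)).
    set (A := dd D (S n) _) in Hdef, Hrec |- *.
    assert (E1 : A * (z - x0) = dd D n (repeat x0 a ++ y :: l ++ [z])
                                - dd D n (x0 :: repeat x0 a ++ y :: l))
      by (rewrite Hrec; field; lra).
    assert (E2 : A * (y - x0) = dd D n (repeat x0 a ++ y :: l ++ [z])
                                - dd D n (x0 :: repeat x0 a ++ l ++ [z]))
      by (rewrite Hdef; field; lra).
    replace (A * (z - y)) with (A * (z - x0) - A * (y - x0)) by ring. lra.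
Qed.

Lemma endpoint_recurrence_S_split x0 a y l z : x0 < y < z ->
  StronglySorted Rle (repeat x0 (S a) ++ y :: l ++ [z]) -> (a + length l = n)%nat ->
  dd D (S (S n)) (repeat x0 (S a) ++ y :: l ++ [z]) =
  (dd D (S n) (repeat x0 a ++ y :: l ++ [z]) - dd D (S n) (repeat x0 (S a) ++ y :: l)) / (z - x0).
Proof.
  intros Hy Hs Hn.
  assert (Hdrop := dd_drop_interior x0 a y l z Hy (proj1 (StronglySorted_inv Hs)) Hn).
  pose proof (IH x0 (repeat x0 a ++ l) z) as Hrec.
  rewrite <- app_assoc in Hrec.
  specialize (Hrec (StronglySorted_remove _ _ _ Hs)
                   ltac:(rewrite length_app, repeat_length; lia) ltac:(lra)).
  rewrite !dd_repeat_app_cons by lra. cbn [repeat app] in Hrec |- *. rewrite Hrec.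
  set (A := dd D (S n) (repeat x0 a ++ y :: l ++ [z])) in Hdrop |- *.
  replace (dd D n (repeat x0 a ++ y :: l)) with (dd D n (repeat x0 a ++ l ++ [z]) - A * (z - y))
    by lra.
  field. lra.
Qed.

End EndpointRecurrenceStep.

Lemma endpoint_recurrence_S D n : endpoint_recurrence D n -> endpoint_recurrence D (S n).
Proof.
  intros IH x0 m z Hs Hm Hz.
  destruct (repeat_or_first_neq x0 m) as [Hrep|(a & y & l & Hy & Hxm)].
  - rewrite Hm in Hrep. injection Hrep as ->.
    pose proof (dd_repeat_app_cons D (S n) x0 z (S n) []) as H.
    rewrite app_nil_r in H. apply H. lra.
  - assert (Hm' : m = repeat x0 a ++ y :: l) by now injection Hxm.
    rewrite app_comm_cons, Hxm, <- app_assoc in Hs |- *. rewrite Hm', <- app_assoc in *.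
    cbn [app] in Hs |- *.
    apply StronglySorted_app_inv in Hs as Hsplit. destruct Hsplit as (_ & Htail & Hle).
    assert (Hxy : x0 < y) by (destruct (Hle x0 y); simpl; auto; congruence).
    apply StronglySorted_inv in Htail as [Hl Hyl]. rewrite Forall_forall in Hyl.
    rewrite length_app, repeat_length in Hm. simpl in Hm.
    destruct (Hyl z ltac:(apply in_or_app; simpl; auto)) as [Hyz| <-].
    + apply endpoint_recurrence_S_split; auto; lia.
    + assert (Hl_const : l = repeat y (length l)).
      { apply StronglySorted_app_inv in Hl as (_ & _ & Hly).
        apply Forall_eq_repeat, Forall_forall. intros v Hv.
        assert (v <= y) by (apply Hly; simpl; auto).
        assert (y <= v) by (apply Hyl, in_or_app; auto). lra. }
      rewrite dd_repeat_app_cons by auto. do 3 f_equal.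
      rewrite Hl_const, repeat_cons. reflexivity.
Qed.

Lemma endpoint_recurrence_all D n : endpoint_recurrence D n.
Proof.
  induction n; auto using endpoint_recurrence_0, endpoint_recurrence_S.
Qed.

(* Composing with [clamp a b] turns continuity within [[a, b]] into ordinary continuity at the
   points of [[a, b]], so that the Stdlib lemmas on [continuity_pt] apply. *)
Definition clamp (a b x : R) : R := Rmax a (Rmin b x).

Lemma clamp_in a b x : a <= b -> a <= clamp a b x <= b.
Proof. intros; unfold clamp, Rmax, Rmin; repeat destruct Rle_dec; lra. Qed.

Lemma clamp_id a b x : a <= x <= b -> clamp a b x = x.
Proof. intros; unfold clamp, Rmax, Rmin; repeat destruct Rle_dec; lra. Qed.

Lemma clamp_dist a b x y : a <= x <= b -> Rabs (clamp a b y - x) <= Rabs (y - x).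
Proof.
  intros; unfold clamp, Rmax, Rmin; repeat destruct Rle_dec;
  unfold Rabs; repeat destruct Rcase_abs; lra.
Qed.

Lemma cont_within_clamp a b h : a <= b -> cont_within a b h ->
  forall x, a <= x <= b -> continuity_pt (fun y => h (clamp a b y)) x.
Proof.
  intros Hab Hc x Hx eps He. destruct (Hc x Hx eps He) as (d & Hd & H).
  exists d. split; auto. intros y [_ Hy]. simpl in *. unfold R_dist in *.
  rewrite (clamp_id a b x) by auto.
  apply H; [apply clamp_in; auto|]. eapply Rle_lt_trans; [apply clamp_dist|]; auto.
Qed.

Lemma clamp_cont_within a b h :
  (a <= b -> forall x, a <= x <= b -> continuity_pt (fun y => h (clamp a b y)) x) ->
  cont_within a b h.
Proof.
  intros Hc x Hx eps He.
  destruct (Hc ltac:(lra) x Hx eps He) as (d & Hd & H). exists d. split; auto.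
  intros y Hy Hyx. destruct (Req_dec y x) as [->|Hne].
  - rewrite Rminus_diag, Rabs_R0; auto.
  - specialize (H y). simpl in H. unfold R_dist in H.
    rewrite !clamp_id in H by auto. apply H. repeat split; auto.
Qed.

Lemma cont_within_const a b c : cont_within a b (fun _ => c).
Proof.
  intros x _ eps He; exists 1; split; [lra|]; intros. rewrite Rminus_diag, Rabs_R0; auto.
Qed.

Lemma cont_within_id a b : cont_within a b (fun t => t).
Proof. intros x _ eps He; exists eps; split; auto. Qed.

Lemma cont_within_minus a b f g : cont_within a b f -> cont_within a b g ->
  cont_within a b (fun t => f t - g t).
Proof.
  intros Hf Hg. apply clamp_cont_within; intros Hab x Hx.
  apply continuity_pt_minus; apply cont_within_clamp; auto.
Qed.

Lemma cont_within_mult a b f g : cont_within a b f -> cont_within a b g ->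
  cont_within a b (fun t => f t * g t).
Proof.
  intros Hf Hg. apply clamp_cont_within; intros Hab x Hx.
  apply continuity_pt_mult; apply cont_within_clamp; auto.
Qed.

Lemma cont_within_div a b f g : cont_within a b f -> cont_within a b g ->
  (forall t, a <= t <= b -> g t <> 0) -> cont_within a b (fun t => f t / g t).
Proof.
  intros Hf Hg Hn. apply clamp_cont_within; intros Hab x Hx.
  apply continuity_pt_div; try (apply cont_within_clamp; auto). rewrite clamp_id; auto.
Qed.

Lemma cont_within_pow a b f n : cont_within a b f -> cont_within a b (fun t => f t ^ n).
Proof.
  intros Hf. induction n; simpl; auto using cont_within_const, cont_within_mult.
Qed.

Lemma cont_within_subinterval a b a' b' f : a <= a' -> b' <= b ->
  cont_within a b f -> cont_within a' b' f.
Proof.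
  intros Ha Hb Hf x Hx eps He. destruct (Hf x ltac:(lra) eps He) as (d & Hd & H).
  exists d; split; auto. intros y Hy; apply H; lra.
Qed.

Lemma cont_within_extrema a b h : a <= b -> cont_within a b h ->
  exists mn mx, a <= mn <= b /\ a <= mx <= b /\
    forall t, a <= t <= b -> h mn <= h t <= h mx.
Proof.
  intros Hab Hc.
  assert (Hcl := cont_within_clamp a b h Hab Hc).
  destruct (continuity_ab_maj _ a b Hab Hcl) as (mx & Hmx & Hmx_in).
  destruct (continuity_ab_min _ a b Hab Hcl) as (mn & Hmn & Hmn_in).
  exists mn, mx. split; [lra|split; [lra|]]. intros y Hy.
  specialize (Hmx y Hy). specialize (Hmn y Hy). rewrite !clamp_id in * by auto. lra.
Qed.

Lemma is_derive_Rminus (f g : R -> R) (x df dg : R) : is_derive f x df -> is_derive g x dg ->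
  is_derive (fun t => f t - g t) x (df - dg).
Proof. intros Hf Hg. apply (is_derive_minus f g); auto. Qed.

Lemma nonpos_derive_le p q (h h' : R -> R) : p <= q -> cont_within p q h ->
  (forall x, p < x < q -> is_derive h x (h' x)) ->
  (forall x, p < x < q -> h' x <= 0) -> h q <= h p.
Proof.
  intros Hpq Hc Hd Hn. destruct (Req_dec p q) as [<-|Hne]; [lra|].
  set (dh := fun x => if Rlt_dec p x then if Rlt_dec x q then h' x else 0 else 0).
  destruct (MVT_gen (fun y => h (clamp p q y)) p q dh) as (c & Hc1 & Hc2).
  - rewrite Rmin_left, Rmax_right by lra. intros x Hx.
    unfold dh. destruct Rlt_dec; [|lra]. destruct Rlt_dec; [|lra].
    apply is_derive_ext_loc with h; auto.
    assert (He : 0 < Rmin (x - p) (q - x)) by (apply Rmin_glb_lt; lra).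
    exists (mkposreal _ He). intros t Ht. change (Rabs (t - x) < Rmin (x - p) (q - x)) in Ht.
    pose proof (Rmin_l (x - p) (q - x)); pose proof (Rmin_r (x - p) (q - x)).
    apply Rabs_def2 in Ht. rewrite clamp_id; lra.
  - rewrite Rmin_left, Rmax_right by lra. intros x Hx. apply cont_within_clamp; auto.
  - rewrite !clamp_id in Hc2 by lra.
    assert (dh c <= 0).
    { unfold dh. destruct Rlt_dec; [|lra]. destruct Rlt_dec; [|lra]. apply Hn; lra. }
    assert (dh c * (q - p) <= 0) by (apply Rmult_le_0_r; lra).
    lra.
Qed.

Lemma nonpos_derive_nonneg p q (h h' : R -> R) : p <= q -> cont_within p q h ->
  (forall x, p < x < q -> is_derive h x (h' x)) ->
  (forall x, p < x < q -> h' x <= 0) -> h q = 0 -> 0 <= h p.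
Proof.
  intros Hpq Hc Hd Hn Hq. rewrite <- Hq. exact (nonpos_derive_le p q h h' Hpq Hc Hd Hn).
Qed.

Lemma nonneg_derive_nonpos p q (h h' : R -> R) : p <= q -> cont_within p q h ->
  (forall x, p < x < q -> is_derive h x (h' x)) ->
  (forall x, p < x < q -> 0 <= h' x) -> h q = 0 -> h p <= 0.
Proof.
  intros Hpq Hc Hd Hn Hq.
  enough (0 <= 0 - h p) by lra.
  apply (nonpos_derive_nonneg p q (fun x => 0 - h x) (fun x => 0 - h' x) Hpq).
  - apply cont_within_minus; auto using cont_within_const.
  - intros x Hx. apply is_derive_Rminus; auto.
    exact (@is_derive_const R_AbsRing R_NormedModule 0 x).
  - intros x Hx. specialize (Hn x Hx). lra.
  - rewrite Hq. ring.
Qed.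

(* [Cr_on] with derivatives required only in the open interval: this is the form that
   [slope_derivs] is shown to inherit. *)
Definition Cr_interior (a b : R) (r : nat) (D : nat -> R -> R) : Prop :=
  (forall k, (k <= r)%nat -> cont_within a b (D k)) /\
  (forall k, (k < r)%nat -> forall x, a < x < b -> is_derive (D k) x (D (S k) x)).

Lemma is_derive_deriv_within a b g g' x : deriv_within a b g g' -> a < x < b ->
  is_derive g x (g' x).
Proof.
  intros Hd Hx. apply is_derive_Reals. intros eps He.
  destruct (Hd x ltac:(lra) (eps / 2) ltac:(lra)) as (d & Hd0 & H).
  assert (Hp : 0 < Rmin d (Rmin (x - a) (b - x))).
  { apply Rmin_glb_lt; auto. apply Rmin_glb_lt; lra. }
  exists (mkposreal _ Hp). intros h Hh Hhd. simpl in Hhd.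
  pose proof (Rmin_l d (Rmin (x - a) (b - x))). pose proof (Rmin_r d (Rmin (x - a) (b - x))).
  pose proof (Rmin_l (x - a) (b - x)). pose proof (Rmin_r (x - a) (b - x)).
  assert (Hy : a <= x + h <= b) by (apply Rabs_def2 in Hhd; lra).
  specialize (H (x + h) Hy ltac:(replace (x + h - x) with h by ring; lra)).
  replace (x + h - x) with h in H by ring.
  replace ((g (x + h) - g x) / h - g' x) with ((g (x + h) - g x - g' x * h) / h) by (field; auto).
  assert (0 < Rabs h) by (apply Rabs_pos_lt; auto).
  rewrite Rabs_div by auto. apply Rlt_div_l; nra.
Qed.

Lemma Cr_on_interior a b r D : Cr_on a b r D -> Cr_interior a b r D.
Proof.
  intros [Hc Hd]. split; auto.
  intros k Hk x Hx. apply (is_derive_deriv_within a b); auto.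
Qed.

(* [taylor_rem D z i t] is the remainder at [z] of the Taylor polynomial of order [i] of
   [D 0] around [t], read as a function of the base point [t]. *)
Fixpoint taylor_rem (D : nat -> R -> R) (z : R) (i : nat) (t : R) : R :=
  match i with
  | O => D O z - D O t
  | S i' => taylor_rem D z i' t - D (S i') t * (z - t) ^ S i' / INR (fact (S i'))
  end.

Lemma INR_fact_S i : INR (fact (S i)) = INR (S i) * INR (fact i).
Proof. rewrite fact_simpl, mult_INR. reflexivity. Qed.

Lemma is_derive_taylor_term (g : R -> R) (g' z : R) i (s : R) : is_derive g s g' ->
  is_derive (fun t => g t * (z - t) ^ S i / INR (fact (S i))) s
    (g' * (z - s) ^ S i / INR (fact (S i)) - g s * (z - s) ^ i / INR (fact i)).
Proof.
  intros Hg. auto_derive; [exists g'; exact Hg|].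
  change (fact i + i * fact i)%nat with (fact (S i)).
  replace (Derive (fun x => g x) s) with g' by (symmetry; now apply is_derive_unique).
  rewrite INR_fact_S, S_INR.
  replace (match i with O => 1 | S _ => INR i + 1 end) with (INR i + 1)
    by (destruct i; simpl; lra).
  rewrite <- tech_pow_Rmult. unfold Rminus. field.
  split; [apply INR_fact_neq_0|]. pose proof (pos_INR i). lra.
Qed.

Lemma taylor_rem_diag D z i : taylor_rem D z i z = 0.
Proof.
  induction i; cbn [taylor_rem]; [ring|].
  rewrite IHi, Rminus_diag, pow_i by lia. unfold Rdiv. ring.
Qed.

Lemma cont_within_taylor_rem a b r D z i : Cr_interior a b r D -> (i <= r)%nat ->
  cont_within a b (taylor_rem D z i).
Proof.
  intros [Hc _]. induction i; intros Hi; cbn [taylor_rem].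
  - apply cont_within_minus; auto using cont_within_const.
  - apply cont_within_minus; [apply IHi; lia|].
    apply cont_within_div; auto using cont_within_const, INR_fact_neq_0.
    apply cont_within_mult; [apply Hc; lia|].
    apply (cont_within_pow a b (fun t => z - t)), cont_within_minus;
      auto using cont_within_const, cont_within_id.
Qed.

Lemma is_derive_taylor_rem a b r D z i (s : R) :
  Cr_interior a b r D -> (i < r)%nat -> a < s < b ->
  is_derive (taylor_rem D z i) s (- D (S i) s * (z - s) ^ i / INR (fact i)).
Proof.
  intros [_ Hd] Hi Hs. induction i; cbn [taylor_rem].
  - assert (H1 : is_derive (D O) s (D 1%nat s)) by (apply Hd; auto).
    auto_derive; [exists (D 1%nat s); exact H1|].
    replace (Derive (fun x => D O x) s) with (D 1%nat s)
      by (symmetry; now apply is_derive_unique).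
    simpl. field.
  - replace (- D (S (S i)) s * (z - s) ^ S i / INR (fact (S i)))
      with (- D (S i) s * (z - s) ^ i / INR (fact i)
            - (D (S (S i)) s * (z - s) ^ S i / INR (fact (S i))
               - D (S i) s * (z - s) ^ i / INR (fact i))) by (unfold Rdiv; ring).
    apply is_derive_Rminus; [apply IHi; lia|].
    apply is_derive_taylor_term, Hd; [lia|exact Hs].
Qed.

Definition taylor_gap (D : nat -> R -> R) (z : R) (i : nat) (c u : R) : R :=
  taylor_rem D z i u - c * (z - u) ^ S i / INR (fact (S i)).

Section TaylorRemainderBounds.

Variables (a b : R) (r : nat) (D : nat -> R -> R) (z : R) (i : nat).
Hypotheses (HD : Cr_interior a b r D) (Hi : (i < r)%nat).

Lemma is_derive_taylor_gap (c s : R) : a < s < b ->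
  is_derive (taylor_gap D z i c) s
    ((c - D (S i) s) * (z - s) ^ i / INR (fact i)).
Proof.
  intros Hs.
  replace ((c - D (S i) s) * (z - s) ^ i / INR (fact i))
    with (- D (S i) s * (z - s) ^ i / INR (fact i)
          - (0 * (z - s) ^ S i / INR (fact (S i)) - c * (z - s) ^ i / INR (fact i)))
    by (unfold Rdiv; ring).
  apply is_derive_Rminus; [now apply (is_derive_taylor_rem a b r)|].
  apply (is_derive_taylor_term (fun _ => c)).
  exact (@is_derive_const R_AbsRing R_NormedModule c s).
Qed.

Lemma cont_within_taylor_gap (c t : R) : a <= t -> z <= b ->
  cont_within t z (taylor_gap D z i c).
Proof.
  intros Ht Hz. apply cont_within_minus.
  - apply (cont_within_subinterval a b); auto. apply (cont_within_taylor_rem a b r); auto; lia.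
  - apply cont_within_div; auto using cont_within_const, INR_fact_neq_0.
    apply cont_within_mult; [apply cont_within_const|].
    apply (cont_within_pow t z (fun u => z - u)), cont_within_minus;
      auto using cont_within_const, cont_within_id.
Qed.

Lemma taylor_gap_diag (c : R) : taylor_gap D z i c z = 0.
Proof.
  unfold taylor_gap. rewrite taylor_rem_diag, Rminus_diag, pow_i by lia. unfold Rdiv. ring.
Qed.

Lemma taylor_rem_bounds t m M : a <= t <= z -> z <= b ->
  (forall s, t <= s <= z -> m <= D (S i) s <= M) ->
  m * (z - t) ^ S i / INR (fact (S i)) <= taylor_rem D z i t
  <= M * (z - t) ^ S i / INR (fact (S i)).
Proof.
  intros Ht Hz Hbd.
  assert (Hpow : forall s, t < s < z -> 0 <= (z - s) ^ i / INR (fact i)).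
  { intros s Hs. apply Rdiv_le_0_compat; [apply pow_le; lra|apply INR_fact_lt_0]. }
  split.
  - enough (0 <= taylor_gap D z i m t) by (unfold taylor_gap in *; lra).
    apply (nonpos_derive_nonneg t z _ (fun s => (m - D (S i) s) * (z - s) ^ i / INR (fact i)));
      [lra|apply cont_within_taylor_gap; lra| | |apply taylor_gap_diag].
    + intros s Hs. apply is_derive_taylor_gap. lra.
    + intros s Hs. unfold Rdiv. rewrite Rmult_assoc.
      apply Rmult_le_0_r; [destruct (Hbd s ltac:(lra)); lra|apply Hpow; auto].
  - enough (taylor_gap D z i M t <= 0) by (unfold taylor_gap in *; lra).
    apply (nonneg_derive_nonpos t z _ (fun s => (M - D (S i) s) * (z - s) ^ i / INR (fact i)));
      [lra|apply cont_within_taylor_gap; lra| | |apply taylor_gap_diag].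
    + intros s Hs. apply is_derive_taylor_gap. lra.
    + intros s Hs. unfold Rdiv. rewrite Rmult_assoc.
      apply Rmult_le_pos; [destruct (Hbd s ltac:(lra)); lra|apply Hpow; auto].
Qed.

End TaylorRemainderBounds.

Definition slope_off (D : nat -> R -> R) (z : R) (i : nat) (t : R) : R :=
  INR (fact i) * taylor_rem D z i t / (z - t) ^ S i.

(* The derivatives of the slope function [t |-> (D 0 z - D 0 t) / (z - t)]; at [t = z]
   they are the limits [D (S i) z / (i + 1)]. *)
Definition slope_derivs (D : nat -> R -> R) (z : R) (i : nat) (t : R) : R :=
  if Req_EM_T t z then D (S i) z / INR (S i) else slope_off D z i t.

Lemma slope_derivs_diag D z i : slope_derivs D z i z = D (S i) z / INR (S i).
Proof. unfold slope_derivs; destruct (Req_EM_T z z); congruence. Qed.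

Lemma slope_derivs_off D z i t : t <> z -> slope_derivs D z i t = slope_off D z i t.
Proof. intros H; unfold slope_derivs; destruct (Req_EM_T t z); congruence. Qed.

Lemma slope_off_0 D z t : slope_off D z 0 t = (D O z - D O t) / (z - t).
Proof. unfold slope_off; simpl. rewrite Rmult_1_l, Rmult_1_r. reflexivity. Qed.

Lemma slope_off_S D z i t : t <> z ->
  slope_off D z (S i) t = (INR (S i) * slope_off D z i t - D (S i) t) / (z - t).
Proof.
  intros Ht. assert (Hzt : z - t <> 0) by lra.
  assert (Hp : (z - t) ^ S i <> 0) by (apply pow_nonzero; auto).
  unfold slope_off. cbn [taylor_rem].
  change ((z - t) ^ S (S i)) with ((z - t) * (z - t) ^ S i).
  set (p := (z - t) ^ S i) in *. rewrite INR_fact_S.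
  field. repeat split; auto using INR_fact_neq_0, not_0_INR.
Qed.

Lemma locally_neq (x z : R) : x <> z -> locally x (fun t => t <> z).
Proof.
  intros Hxz. assert (Hd : 0 < Rabs (x - z)) by (apply Rabs_pos_lt; lra).
  exists (mkposreal _ Hd). intros t Ht ->. change (Rabs (z - x) < Rabs (x - z)) in Ht.
  rewrite Rabs_minus_sym in Ht. lra.
Qed.

Lemma is_derive_slope_off a b r D z j x : Cr_interior a b r D -> (j < r)%nat ->
  a < x < b -> x <> z -> is_derive (slope_off D z j) x (slope_off D z (S j) x).
Proof.
  intros HD Hj Hx Hxz. assert (Hzx : z - x <> 0) by lra.
  destruct HD as [_ Hd]. induction j.
  - assert (H0 : is_derive (D O) x (D 1%nat x)) by (apply Hd; auto).
    apply (is_derive_ext (fun t => (D O z - D O t) / (z - t)));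
      [intros; now rewrite slope_off_0|].
    auto_derive; [split; [exists (D 1%nat x); exact H0|auto]|].
    replace (Derive (fun t => D O t) x) with (D 1%nat x)
      by (symmetry; now apply is_derive_unique).
    rewrite slope_off_S, slope_off_0 by auto. simpl. field. auto.
  - assert (H0 : is_derive (D (S j)) x (D (S (S j)) x)) by (apply Hd; auto).
    assert (H1 := IHj ltac:(lia)). set (g := slope_off D z j) in H1.
    apply (is_derive_ext_loc (fun t => (INR (S j) * g t - D (S j) t) / (z - t))).
    { apply (filter_imp (fun t => t <> z)); [|now apply locally_neq].
      intros t Ht. symmetry. now apply slope_off_S. }
    auto_derive;
      [repeat split; auto; [exists (slope_off D z (S j) x)|exists (D (S (S j)) x)]; auto|].
    replace (Derive (fun t => g t) x) with (slope_off D z (S j) x)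
      by (symmetry; now apply is_derive_unique).
    replace (Derive (fun t => D (S j) t) x) with (D (S (S j)) x)
      by (symmetry; now apply is_derive_unique).
    rewrite (slope_off_S D z (S j)), (slope_off_S D z j) by auto. fold g.
    replace (match j with O => 1 | S _ => INR j + 1 end) with (INR j + 1)
      by (destruct j; simpl; lra).
    rewrite !S_INR. field. auto.
Qed.

Lemma cont_within_slope_off a b b' r D z j : Cr_interior a b r D -> (j <= r)%nat ->
  b' <= b -> b' < z -> cont_within a b' (slope_off D z j).
Proof.
  intros HD Hj Hb Hz. apply cont_within_div.
  - apply cont_within_mult; [apply cont_within_const|].
    apply (cont_within_subinterval a b); [lra|auto|]. now apply (cont_within_taylor_rem a b r).
  - apply (cont_within_pow a b' (fun t => z - t)), cont_within_minus;
      auto using cont_within_const, cont_within_id.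
  - intros t Ht. apply pow_nonzero. lra.
Qed.

Lemma slope_derivs_bounds a b r D z i t m M : Cr_interior a b r D -> (i < r)%nat ->
  a <= t <= z -> z <= b -> (forall s, t <= s <= z -> m <= D (S i) s <= M) ->
  m <= INR (S i) * slope_derivs D z i t <= M.
Proof.
  intros HD Hi Ht Hz Hbd. assert (HSi : 0 < INR (S i)) by (apply lt_0_INR; lia).
  destruct (Req_dec t z) as [->|Htz].
  - rewrite slope_derivs_diag. replace (INR (S i) * (D (S i) z / INR (S i))) with (D (S i) z)
      by (field; lra). apply Hbd. lra.
  - rewrite slope_derivs_off by auto. unfold slope_off.
    assert (Hp : 0 < (z - t) ^ S i) by (apply pow_lt; lra).
    destruct (taylor_rem_bounds a b r D z i HD Hi t m M Ht Hz Hbd) as [Hlo Hhi].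
    rewrite INR_fact_S in Hlo, Hhi.
    set (F := INR (S i) * INR (fact i)) in Hlo, Hhi.
    assert (HF : 0 < F) by (pose proof (INR_fact_lt_0 i); unfold F; nra).
    replace (INR (S i) * (INR (fact i) * taylor_rem D z i t / (z - t) ^ S i))
      with (F * taylor_rem D z i t / (z - t) ^ S i) by (unfold F; field; lra).
    apply Rle_div_l in Hlo; apply Rle_div_r in Hhi; auto.
    split; [apply Rle_div_r|apply Rle_div_l]; lra.
Qed.

Lemma cont_within_slope_derivs a b n D z k : Cr_interior a b (S n) D -> (k <= n)%nat ->
  a <= z <= b -> cont_within a z (slope_derivs D z k).
Proof.
  intros HD Hk Hz x Hx eps He. destruct (Req_dec x z) as [->|Hxz].
  - assert (HSk : 1 <= INR (S k)) by (apply (le_INR 1); lia).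
    destruct (proj1 HD (S k) ltac:(lia) z Hz (eps / 2) ltac:(lra)) as (d & Hd & Hcont).
    exists d. split; auto. intros y Hy Hyz.
    assert (Hbd : forall s, y <= s <= z ->
              D (S k) z - eps / 2 <= D (S k) s <= D (S k) z + eps / 2).
    { intros s Hs.
      assert (Hs' : Rabs (s - z) < d) by (apply Rabs_def2 in Hyz; apply Rabs_def1; lra).
      specialize (Hcont s ltac:(lra) Hs'). apply Rabs_def2 in Hcont. lra. }
    destruct (slope_derivs_bounds a b (S n) D z k y _ _ HD ltac:(lia) ltac:(lra) ltac:(lra) Hbd).
    rewrite slope_derivs_diag.
    set (u := slope_derivs D z k y) in *.
    replace (u - D (S k) z / INR (S k)) with ((INR (S k) * u - D (S k) z) / INR (S k))
      by (field; lra).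
    rewrite Rabs_div, (Rabs_right (INR (S k))) by lra.
    apply Rlt_div_l; [lra|]. apply Rabs_def1; nra.
  - set (z' := (x + z) / 2).
    destruct (cont_within_slope_off a b z' (S n) D z k HD ltac:(lia) ltac:(unfold z'; lra)
                ltac:(unfold z'; lra) x ltac:(unfold z'; lra) eps He) as (d & Hd & Hcont).
    exists (Rmin d (z' - x)). split; [apply Rmin_glb_lt; auto; unfold z'; lra|].
    intros y Hy Hyx. pose proof (Rmin_l d (z' - x)). pose proof (Rmin_r d (z' - x)).
    apply Rabs_def2 in Hyx as Hyx'.
    rewrite !slope_derivs_off by (unfold z' in *; lra). apply Hcont; lra.
Qed.

Lemma Cr_interior_slope_derivs a b n D z : Cr_interior a b (S n) D -> a <= z <= b ->
  Cr_interior a z n (slope_derivs D z).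
Proof.
  intros HD Hz. split.
  - intros k Hk. now apply (cont_within_slope_derivs a b n).
  - intros k Hk x Hx.
    apply (is_derive_ext_loc (slope_off D z k)).
    { apply (filter_imp (fun t => t <> z)); [|apply locally_neq; lra].
      intros t Ht. symmetry. now apply slope_derivs_off. }
    rewrite slope_derivs_off by lra. apply (is_derive_slope_off a b (S n)); auto; lra.
Qed.

Lemma dd_repeat_snoc D k c z :
  dd D (S k) (repeat c (S k) ++ [z]) = slope_derivs D z k c / INR (fact k).
Proof.
  destruct (Req_dec c z) as [->|Hcz].
  - rewrite <- repeat_cons. change (z :: repeat z (S k)) with (repeat z (S (S k))).
    rewrite dd_repeat, slope_derivs_diag, INR_fact_S. field.
    split; [apply not_0_INR; lia|apply INR_fact_neq_0].
  - rewrite slope_derivs_off by auto. induction k.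
    + rewrite (dd_repeat_app_cons D 0 c z 0 []), slope_off_0 by lra. simpl. field. lra.
    + pose proof (dd_repeat_app_cons D (S k) c z (S k) [] ltac:(lra)) as H.
      rewrite app_nil_r in H. rewrite H, IHk, dd_repeat, slope_off_S, INR_fact_S by auto.
      field. repeat split; first [apply INR_fact_neq_0 | apply not_0_INR; lia | lra].
Qed.

Lemma dd_snoc D k l z : length l = S k -> dd D (S k) (l ++ [z]) = dd (slope_derivs D z) k l.
Proof.
  revert l. induction k as [|k IH]; intros [|x0 t] Hl; try discriminate.
  - destruct t; [|discriminate]. change [x0] with (repeat x0 1).
    rewrite dd_repeat_snoc, dd_repeat. reflexivity.
  - destruct (repeat_or_first_neq x0 t) as [Hrep|(a & y & l & Hy & Hxt)].
    + injection Hl as Hl. rewrite Hrep, Hl, dd_repeat_snoc, dd_repeat. reflexivity.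
    + rewrite Hxt in Hl |- *. rewrite length_app, repeat_length in Hl. simpl in Hl.
      rewrite <- app_assoc. cbn [app].
      rewrite !dd_repeat_app_cons by auto.
      rewrite app_comm_cons, !app_assoc.
      rewrite !IH by (rewrite length_app, repeat_length; simpl; lia). reflexivity.
Qed.

Lemma dd_mean_value k : forall a b D l m M, Cr_interior a b k D ->
  StronglySorted Rle l -> length l = S k -> List.Forall (fun t => a <= t <= b) l ->
  (forall t, a <= t <= b -> m <= D k t <= M) ->
  m / INR (fact k) <= dd D k l <= M / INR (fact k).
Proof.
  induction k as [|k IH]; intros a b D l m M HD Hs Hl Hin Hbd.
  - destruct l as [|x [|]]; try discriminate. inversion Hin as [|? ? Hx]. simpl.
    rewrite !Rdiv_1_r. auto.
  - destruct (@exists_last _ l ltac:(intros ->; discriminate)) as (l' & z & ->).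
    rewrite length_app in Hl. simpl in Hl.
    apply Forall_app in Hin as [Hin' Hz]. inversion Hz as [|? ? Hz'].
    apply StronglySorted_app_inv in Hs as (Hs' & _ & Hle).
    rewrite dd_snoc, INR_fact_S by lia.
    assert (HSk : 0 < INR (S k)) by (apply lt_0_INR; lia).
    replace (m / (INR (S k) * INR (fact k))) with (m / INR (S k) / INR (fact k))
      by (field; split; [apply INR_fact_neq_0|lra]).
    replace (M / (INR (S k) * INR (fact k))) with (M / INR (S k) / INR (fact k))
      by (field; split; [apply INR_fact_neq_0|lra]).
    apply (IH a z); auto.
    + now apply (Cr_interior_slope_derivs a b).
    + lia.
    + rewrite Forall_forall in *. intros t Ht.
      split; [apply Hin'; auto|apply Hle; simpl; auto].
    + intros t Ht.
      destruct (slope_derivs_bounds a b (S k) D z k t m M HD ltac:(lia) Ht ltac:(lra)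
                  ltac:(intros s Hs''; apply Hbd; lra)).
      split; [apply Rle_div_l|apply Rle_div_r]; lra.
Qed.

Lemma le_Lub_Rbar (E : R -> Prop) B e : (forall u, E u -> u <= B) -> E e ->
  e <= real (Lub_Rbar E).
Proof.
  intros HB He. destruct (Lub_Rbar_correct E) as [Hub Hlub].
  assert (H1 := Hub e He). assert (H2 := Hlub (Finite B) HB).
  destruct (Lub_Rbar E); simpl in *; auto; contradiction.
Qed.

Lemma sym_diff_1_in g u x a b : a <= x - u / 2 -> x + u / 2 <= b ->
  sym_diff 1 g u x a b = g (x + u / 2) - g (x - u / 2).
Proof.
  intros H1 H2. unfold sym_diff. simpl INR.
  destruct Rle_dec; [|lra]. destruct Rle_dec; [|lra].
  simpl. unfold Binomial.C. simpl.
  replace (x + (1 / 2 - 0) * u) with (x + u / 2) by field.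
  replace (x + (1 / 2 - 1) * u) with (x - u / 2) by field. field.
Qed.

Lemma sym_diff_1_out g u x a b : ~ (a <= x - u / 2 /\ x + u / 2 <= b) ->
  sym_diff 1 g u x a b = 0.
Proof.
  intros H. unfold sym_diff. simpl INR.
  destruct Rle_dec; auto. destruct Rle_dec; auto. exfalso. apply H; split; lra.
Qed.

Lemma Rabs_sym_diff_1_le g u x a b m M : 0 <= u -> m <= M ->
  (forall t, a <= t <= b -> m <= g t <= M) -> Rabs (sym_diff 1 g u x a b) <= M - m.
Proof.
  intros Hu Hm Hb.
  destruct (Rle_dec a (x - u / 2)) as [H1|H1];
  [destruct (Rle_dec (x + u / 2) b) as [H2|H2]|].
  - rewrite sym_diff_1_in by auto.
    assert (A := Hb (x + u / 2) ltac:(lra)). assert (B := Hb (x - u / 2) ltac:(lra)).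
    apply Rabs_le. lra.
  - rewrite sym_diff_1_out, Rabs_R0 by tauto. lra.
  - rewrite sym_diff_1_out, Rabs_R0 by tauto. lra.
Qed.

Lemma omega_1_ge_osc g a b mn mx : a < b -> a <= mn <= b -> a <= mx <= b ->
  (forall t, a <= t <= b -> g mn <= g t <= g mx) ->
  g mx - g mn <= omega 1 g (b - a) a b.
Proof.
  intros Hab Hn Hx Hext. unfold omega.
  assert (Hle : g mn <= g mx) by (apply Hext; auto).
  apply (le_Lub_Rbar _ (g mx - g mn)).
  { intros v (u & x0 & Hu & Hx0 & ->). apply Rabs_sym_diff_1_le; auto; lra. }
  destruct (Req_dec mx mn) as [->|Hne].
  - exists (b - a), a. repeat split; try lra.
    rewrite sym_diff_1_out, Rabs_R0 by (intros []; lra). ring.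
  - exists (Rabs (mx - mn)), ((mx + mn) / 2). repeat split; try lra.
    + apply Rabs_pos_lt. lra.
    + apply Rabs_le_between. split; lra.
    + destruct (Rle_dec mn mx).
      * rewrite (Rabs_right (mx - mn)), sym_diff_1_in by lra.
        replace ((mx + mn) / 2 + (mx - mn) / 2) with mx by field.
        replace ((mx + mn) / 2 - (mx - mn) / 2) with mn by field.
        rewrite Rabs_right; lra.
      * rewrite (Rabs_left (mx - mn)), sym_diff_1_in by lra.
        replace ((mx + mn) / 2 + - (mx - mn) / 2) with mn by field.
        replace ((mx + mn) / 2 - - (mx - mn) / 2) with mx by field.
        rewrite Rabs_left1; lra.
Qed.

(* Steps [u > b - a] do not fit in [[a, b]], so they only contribute zeros. *)
Lemma omega_1_beyond_length g a b t : a < b -> b - a <= t ->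
  omega 1 g t a b = omega 1 g (b - a) a b.
Proof.
  intros Hab Ht. unfold omega. f_equal. apply Lub_Rbar_eqset. intros v. split.
  - intros (u & x0 & Hu & Hx0 & ->).
    destruct (Rle_dec u (b - a)); [exists u, x0; repeat split; auto; lra|].
    rewrite sym_diff_1_out by (intros []; lra). exists (b - a), a. repeat split; try lra.
    rewrite sym_diff_1_out by (intros []; lra). reflexivity.
  - intros (u & x0 & Hu & Hx0 & ->). exists u, x0. repeat split; auto; lra.
Qed.

Lemma maxlist_In_le v l : In v l -> v <= maxlist l.
Proof.
  destruct l as [|a l]; [intros []|]. simpl.
  assert (H : forall w, In w (a :: l) -> w <= fold_right Rmax a l).
  { induction l as [|h t IH]; simpl; intros w Hw.
    - destruct Hw as [<-|[]]. lra.
    - destruct Hw as [<-|[<-|Hw]].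
      + eapply Rle_trans; [apply IH; left; auto|apply Rmax_r].
      + apply Rmax_l.
      + eapply Rle_trans; [apply IH; right; auto|apply Rmax_r]. }
  intros [<-|Hv]; apply H; simpl; auto.
Qed.

Lemma Lambda_r_ge_full r y phi :
  Lambda_pqr (S r) y phi 0 (S r) r <= Lambda_r (S r) r y phi.
Proof.
  apply maxlist_In_le.
  apply (in_map (fun pq => Lambda_pqr (S r) y phi (fst pq) (snd pq) r) _ (0%nat, S r)).
  apply filter_In. split; [apply in_prod; apply in_seq; lia|apply Nat.leb_refl].
Qed.

Lemma Lambda_pqr_full r y phi c : y O < y (S r) ->
  (forall u, y (S r) - y O <= u <= 2 * (y (S r) - y O) -> phi u = c) ->
  Lambda_pqr (S r) y phi 0 (S r) r = c / (2 * (y (S r) - y O)).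
Proof.
  intros Hy Hphi. remember (y (S r) - y O) as L eqn:HLdef. assert (HL : 0 < L) by lra.
  unfold Lambda_pqr, dpq, y_after, y_before.
  rewrite Nat.eqb_refl, Nat.sub_diag, <- HLdef. simpl seq. simpl map. simpl prodR.
  replace (Rmin (y (S r) + L - y O) (y (S r) - (y O - L))) with (2 * L)
    by (unfold Rmin; destruct Rle_dec; lra).
  replace (Z.of_nat 0 + Z.of_nat r - Z.of_nat (S r) - 1)%Z with (-2)%Z by lia.
  rewrite (RInt_ext _ (fun u => c * / (u * u))).
  2: { intros u Hu. rewrite Rmin_left, Rmax_right in Hu by lra.
       rewrite Hphi by lra. simpl powerRZ. rewrite Rmult_1_r, Rmult_comm. reflexivity. }
  assert (HI : is_RInt (fun u => c * / (u * u)) L (2 * L)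
                 (minus ((fun u => - c / u) (2 * L)) ((fun u => - c / u) L))).
  { apply (is_RInt_derive (fun u => - c / u)).
    - intros u Hu. rewrite Rmin_left, Rmax_right in Hu by lra.
      auto_derive; [lra|field; lra].
    - intros u Hu. rewrite Rmin_left, Rmax_right in Hu by lra.
      apply (ex_derive_continuous (fun u => c * / (u * u))). auto_derive.
      apply Rmult_integral_contrapositive; split; lra. }
  rewrite (is_RInt_unique _ _ _ _ HI).
  unfold minus, plus, opp; simpl. field. lra.
Qed.

Lemma StronglySorted_between x0 l z : StronglySorted Rle (x0 :: l ++ [z]) ->
  List.Forall (fun u => x0 <= u <= z) (x0 :: l ++ [z]).
Proof.
  intros Hs. apply Forall_forall. intros u Hu. split.
  - destruct Hu as [<-|Hu]; [lra|].
    apply StronglySorted_inv in Hs as [_ Hge]. rewrite Forall_forall in Hge. auto.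
  - rewrite app_comm_cons in Hs, Hu. apply in_app_or in Hu as [Hu|[<-|[]]]; [|lra].
    apply StronglySorted_app_inv in Hs as (_ & _ & Hle). apply Hle; simpl; auto.
Qed.

Lemma dd_endpoints_le_osc r D x0 l z m M :
  StronglySorted Rle (x0 :: l ++ [z]) -> length l = r -> x0 < z ->
  Cr_interior x0 z r D -> (forall t, x0 <= t <= z -> m <= D r t <= M) ->
  Rabs (dd D (S r) (x0 :: l ++ [z])) <= (M - m) / (z - x0).
Proof.
  intros Hs Hl Hz HD Hbd.
  rewrite endpoint_recurrence_all by auto.
  pose proof (StronglySorted_between _ _ _ Hs) as Hin.
  assert (Hin_tl := Forall_inv_tail Hin). rewrite app_comm_cons in Hin.
  apply Forall_app in Hin as [Hin_init _].
  pose proof Hs as Hs_tl. apply StronglySorted_inv in Hs_tl as [Hs_tl _].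
  rewrite app_comm_cons in Hs. apply StronglySorted_app_inv in Hs as [Hs_init _].
  assert (HA := dd_mean_value r x0 z D (l ++ [z]) m M HD Hs_tl
                  ltac:(rewrite length_app; simpl; lia) Hin_tl Hbd).
  assert (HC := dd_mean_value r x0 z D (x0 :: l) m M HD Hs_init ltac:(simpl; lia) Hin_init Hbd).
  assert (Hfact : 1 <= INR (fact r)) by (apply (le_INR 1), lt_O_fact).
  assert (Hmm : m <= M) by (destruct (Hbd x0); lra).
  assert (Hosc : (M - m) / INR (fact r) <= M - m) by (apply Rle_div_l; nra).
  rewrite Rabs_div, (Rabs_right (z - x0)) by lra.
  apply Rmult_le_compat_r; [left; apply Rinv_0_lt_compat; lra|].
  assert (E : (M - m) / INR (fact r) = M / INR (fact r) - m / INR (fact r)) by (field; lra).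
  apply Rabs_le. lra.
Qed.

Lemma Sorted_map_seq (x : nat -> R) N : (forall i, (i < N)%nat -> x i <= x (S i)) ->
  forall s n, (s + n <= S N)%nat -> Sorted Rle (map x (seq s n)).
Proof.
  intros Hx s n. revert s. induction n as [|n IH]; intros s Hsn; simpl; [constructor|].
  constructor; [apply IH; lia|]. destruct n; simpl; constructor. apply Hx. lia.
Qed.

Lemma map_seq_endpoints (x : nat -> R) r :
  map x (seq 0 (S (S r))) = x O :: map x (seq 1 r) ++ [x (S r)].
Proof.
  change (seq 0 (S (S r))) with (0%nat :: seq 1 (S r)).
  rewrite seq_S. cbn [map]. rewrite map_app. reflexivity.
Qed.

Lemma divdiff_le_osc r x D m M : (forall i, (i < S r)%nat -> x i <= x (S i)) ->
  x O < x (S r) -> Cr_interior (x O) (x (S r)) r D ->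
  (forall t, x O <= t <= x (S r) -> m <= D r t <= M) ->
  Rabs (divdiff D (map x (seq 0 (S (S r))))) <= (M - m) / (x (S r) - x O).
Proof.
  intros Hmono Hlt HD Hbd. unfold divdiff.
  rewrite length_map, length_seq, Nat.sub_1_r. simpl Nat.pred.
  rewrite map_seq_endpoints.
  apply dd_endpoints_le_osc; auto; [|now rewrite length_map, length_seq].
  rewrite <- map_seq_endpoints. apply Sorted_StronglySorted; [exact Rle_trans|].
  now apply (Sorted_map_seq x (S r)).
Qed.

Theorem lemma3p1 : forall r : nat, exists c : R,
  forall (x : nat -> R) (f : R -> R) (D : nat -> R -> R),
    (forall i, (i < S r)%nat -> x i <= x (S i)) ->
    x O < x (S r) ->
    (forall t, D O t = f t) ->
    Cr_on (x O) (x (S r)) r D ->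
    Rabs (divdiff D (map x (seq 0 (S (S r)))))
      <= c * Lambda_r (S r) r x (fun t => omega 1 (D r) t (x O) (x (S r))).
Proof.
  intros r. exists 2. intros x f D Hmono Hlt _ HCr.
  destruct (cont_within_extrema (x O) (x (S r)) (D r) ltac:(lra) (proj1 HCr r (le_n r)))
    as (mn & mx & Hmn & Hmx & Hext).
  assert (Hdd := divdiff_le_osc r x D _ _ Hmono Hlt (Cr_on_interior _ _ _ _ HCr) Hext).
  assert (Hosc := omega_1_ge_osc (D r) _ _ mn mx Hlt Hmn Hmx Hext).
  assert (HLambda := Lambda_r_ge_full r x (fun t => omega 1 (D r) t (x O) (x (S r)))).
  rewrite (Lambda_pqr_full r x _ _ Hlt) in HLambda
    by (intros u Hu; apply omega_1_beyond_length; lra).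
  set (L := x (S r) - x O) in *. set (W := omega 1 (D r) L (x O) (x (S r))) in *.
  assert (HL : 0 < L) by (unfold L; lra).
  apply (Rle_trans _ _ _ Hdd).
  apply Rle_trans with (W / L); [apply Rmult_le_compat_r; [left; apply Rinv_0_lt_compat|]; lra|].
  replace (W / L) with (2 * (W / (2 * L))) by (field; lra). lra.
Qed.
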